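(* Assume the setting below, on the mesh $S_\lambda$ with either $\lambda=N$ or $\lambda=\varepsilon^{-1}$. Suppose there are a constant $C^*>0$ and numbers $\eta_1,\eta_2\ge 0$ such that the truncation error of $w$ satisfies \[ |\tau_i[w]|\le \tau_i^*:=\begin{cases} C^*\eta_1\left(1+\varepsilon^{-1}e^{-\beta x_i/\varepsilon}\right), & 1\le i\le J-1,\\ C^*\eta_2, & J\le i\le N-1.\end{cases} \] Then \[ \|w^N-W^N\|\le C\eta,\qquad \eta=\max\{\kappa\eta_1,\eta_2\}, \] where $\kappa=1$ if $\lambda=N$ and $\kappa=1+|\ln\varepsilon|N^{-1}$ if $\lambda=\varepsilon^{-1}$. Here $C$ depends only on $C^*$ and the data $b,c,\beta,Q,a$; it does not depend on $\varepsilon$, $N$, $\eta_1$ or $\eta_2$.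
   Context: Standing setup. Let $0<\varepsilon<1$. Let $b,c,f\in C^4[0,1]$, and let $\beta$ be a constant with $b(x)>\beta>0$ and $c(x)\ge0$ on $[0,1]$. Let $u$ be the solution of $-\varepsilon u''-b u'+cu=f$ on $(0,1)$ with $u(0)=u(1)=0$. Let $u_0$ be the reduced solution, i.e. the solution of $-b u_0'+c u_0=f$ on $(0,1)$ with $u_0(1)=0$. Set $w=u-u_0$; it solves $-\varepsilon w''-bw'+cw=\varepsilon u_0''$ on $(0,1)$, $w(0)=-u_0(0)$, $w(1)=0$. Mesh $S_\lambda$. $N$ is a positive integer. $Q\in(0,1)$ is a fixed rational number such that $J=QN$ is an integer. $a>0$ is a mesh parameter, and $\lambda\in\{N,\varepsilon^{-1}\}$. The transition point is $\xi=(a\varepsilon/\beta)\ln\lambda$, assumed to satisfy $\xi\le Q$. Set $h=\xi/J$ and $H=(1-\xi)/(N-J)$. The mesh points are $x_i=ih$ for $0\le i\le J$ and $x_i=\xi+(i-J)H$ for $J\le i\le N$. Write $h_i=x_i-x_{i-1}$ and $\hbar_i=(h_i+h_{i+1})/2$. $S_N$ is the Shishkin mesh and $S_{1/\varepsilon}$ is the A-mesh. Scheme. For mesh functions define $D^+U_i=(U_{i+1}-U_i)/h_{i+1}$, $D^-U_i=(U_i-U_{i-1})/h_i$ and $D''U_i=(D^+U_i-D^-U_i)/\hbar_i$. Let $\sigma(\rho)=2\rho/(e^{2\rho}-1)$ for $\rho>0$, $\sigma(0)=1$, and $\rho_i=b(x_i)h_{i+1}/(2\varepsilon)$. The ASI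 operator is \[ L^NU_i=-\varepsilon\sigma(\rho_i)D''U_i-b(x_i)D^+U_i+c(x_i)U_i,\qquad 1\le i\le N-1. \] $W^N$ denotes the solution of $W^N_0=-u_0(0)$, $L^NW^N_i=\varepsilon u_0''(x_i)$ for $1\le i\le N-1$, $W^N_N=0$. For a function $g$, $g^N$ is its restriction to the mesh, and $\|U\|=\max_{0\le i\le N}|U_i|$. For smooth $g$ the truncation error is \[ \tau_i[g]=-\varepsilon\sigma(\rho_i)D''g(x_i)-b(x_i)D^+g(x_i)+\varepsilon g''(x_i)+b(x_i)g'(x_i),\qquad 1\le i\le N-1. \] $C$ denotes a generic positive constant independent of $\varepsilon$ and $N$. *)

From Stdlib Require Import Reals Lra.
From Coquelicot Require Import Coquelicot.
Open Scope R_scope.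

Definition deriv_on01 (g g' : R -> R) : Prop :=
  forall x, 0 <= x <= 1 ->
    filterlim (fun y => (g y - g x) / (y - x))
      (within (fun y => 0 <= y <= 1 /\ y <> x) (locally x)) (locally (g' x)).

Definition cont_on01 (g : R -> R) : Prop :=
  forall x, 0 <= x <= 1 ->
    filterlim g (within (fun y => 0 <= y <= 1) (locally x)) (locally (g x)).

Definition Ck01 (k : nat) (g : R -> R) : Prop :=
  exists D : nat -> R -> R,
    (forall x, 0 <= x <= 1 -> D 0%nat x = g x) /\
    (forall j, (j < k)%nat -> deriv_on01 (D j) (D (S j))) /\
    cont_on01 (D k).

(** Mesh S_lambda.  [shishkin = true] : lambda = N (Shishkin mesh);
    [shishkin = false] : lambda = 1/eps (A-mesh). *)
Definition lam (shishkin : bool) (eps : R) (N : nat) : R :=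
  if shishkin then INR N else / eps.

Definition kappa (shishkin : bool) (eps : R) (N : nat) : R :=
  if shishkin then 1 else 1 + Rabs (ln eps) / INR N.

Definition xi (shishkin : bool) (a beta eps : R) (N : nat) : R :=
  a * eps / beta * ln (lam shishkin eps N).

Definition mesh (shishkin : bool) (a beta eps : R) (N J : nat) (i : nat) : R :=
  let xi := xi shishkin a beta eps N in
  let h := xi / INR J in
  let H := (1 - xi) / (INR N - INR J) in
  if (i <=? J)%nat then INR i * h else xi + (INR i - INR J) * H.

Definition hstep (x : nat -> R) (i : nat) : R := x i - x (i - 1)%nat.
Definition hbar (x : nat -> R) (i : nat) : R := (hstep x i + hstep x (S i)) / 2.

Definition Dplus (x : nat -> R) (U : nat -> R) (i : nat) : R :=
  (U (S i) - U i) / hstep x (S i).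
Definition Dminus (x : nat -> R) (U : nat -> R) (i : nat) : R :=
  (U i - U (i - 1)%nat) / hstep x i.
Definition D2 (x : nat -> R) (U : nat -> R) (i : nat) : R :=
  (Dplus x U i - Dminus x U i) / hbar x i.

Definition sigma (rho : R) : R :=
  if Req_EM_T rho 0 then 1 else 2 * rho / (exp (2 * rho) - 1).

Definition rho (eps : R) (b : R -> R) (x : nat -> R) (i : nat) : R :=
  b (x i) * hstep x (S i) / (2 * eps).

Definition LN (eps : R) (b c : R -> R) (x : nat -> R) (U : nat -> R) (i : nat) : R :=
  - eps * sigma (rho eps b x i) * D2 x U i - b (x i) * Dplus x U i + c (x i) * U i.

Definition tau (eps : R) (b : R -> R) (x : nat -> R) (g : R -> R) (i : nat) : R :=
  - eps * sigma (rho eps b x i) * D2 x (fun j => g (x j)) i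
  - b (x i) * Dplus x (fun j => g (x j)) i
  + eps * Derive_n g 2 (x i) + b (x i) * Derive g (x i).

From Pilot Require Import Defs.
From Stdlib Require Import Reals Lra Lia.
From Coquelicot Require Import Coquelicot.
Import Pilot.Defs.
Open Scope R_scope.

(* The error [e = w^N - W^N] vanishes at both ends of the mesh and satisfies
   [L^N e = tau[w]] at the interior nodes.  Because [sigma > 0], [D^+] is upwinded
   and [c >= 0], [L^N] obeys a discrete maximum principle, so [|e| <= Phi] for any
   barrier with [L^N Phi >= |tau[w]|].  We take [Phi_i = K1 (2 - x_i) + K2 Psi_i]
   with [Psi] a discrete exponential: [L^N (2 - x) >= beta], while on the uniform
   fine mesh of step [h] one has [L^N Psi_i >= beta^2 Psi_i / (4 eps r)] and
   [Psi_i >= exp (- beta x_i / eps)], where [r = 1 + beta h / (2 eps)].  This gives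
   [|e| <= 2 K1 + K2 = O(eta1 + eta2 + r eta1)], and [r <= (1 + a / 2Q) kappa]
   since [beta h / (2 eps) = (a / 2Q) (ln lambda) / N]. *)

Lemma locally_in_open_unit_interval x : 0 < x < 1 -> locally x (fun y => 0 < y < 1).
Proof.
  intros Hx.
  assert (Hr : 0 < Rmin x (1 - x)) by (apply Rmin_pos; lra).
  exists (mkposreal _ Hr). intros y Hy.
  change (Rabs (y - x) < Rmin x (1 - x)) in Hy.
  pose proof (Rmin_l x (1 - x)). pose proof (Rmin_r x (1 - x)).
  apply Rabs_def2 in Hy. lra.
Qed.

Lemma ex_derive_of_deriv_on01 (g D0 D1 : R -> R) x :
  (forall y, 0 <= y <= 1 -> D0 y = g y) -> deriv_on01 D0 D1 -> 0 < x < 1 ->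
  ex_derive g x.
Proof.
  intros HD0 HD Hx. exists (D1 x). apply is_derive_Reals. intros e He.
  destruct (HD x ltac:(lra) _ (locally_ball (D1 x) (mkposreal e He))) as [d Hd].
  destruct (locally_in_open_unit_interval x Hx) as [d' Hd'].
  assert (Hr : 0 < Rmin d d') by (apply Rmin_pos; apply cond_pos).
  exists (mkposreal _ Hr). intros k Hk0 Hk. simpl in Hk.
  assert (Hball : forall r : posreal, Rmin d d' <= r -> ball x r (x + k)).
  { intros r Hle. change (Rabs (x + k - x) < r). replace (x + k - x) with k by ring. lra. }
  assert (Hin := Hd' _ (Hball d' (Rmin_r d d'))).
  specialize (Hd (x + k) (Hball d (Rmin_l d d')) ltac:(split; [lra | intro E; apply Hk0; lra])).
  change (Rabs ((D0 (x + k) - D0 x) / (x + k - x) - D1 x) < e) in Hd.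
  rewrite !HD0 in Hd by lra. replace (x + k - x) with k in Hd by ring. exact Hd.
Qed.

Lemma Ck01_ex_derive k g : Ck01 k g -> (0 < k)%nat -> forall x, 0 < x < 1 -> ex_derive g x.
Proof. intros [D [HD0 [HD _]]] Hk x. exact (ex_derive_of_deriv_on01 g _ _ x HD0 (HD 0%nat Hk)). Qed.

Section LayerEquation.

Variables (eps : R) (b c f u u0 : R -> R).
Hypotheses
  (Hb : forall x, 0 < x < 1 -> ex_derive b x /\ b x <> 0)
  (Hc : forall x, 0 < x < 1 -> ex_derive c x)
  (Hf : forall x, 0 < x < 1 -> ex_derive f x)
  (Hu : forall x, 0 < x < 1 -> ex_derive u x /\ ex_derive (Derive u) x)
  (Hue : forall x, 0 < x < 1 -> - eps * Derive_n u 2 x - b x * Derive u x + c x * u x = f x)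
  (Hu0 : forall x, 0 < x < 1 -> ex_derive u0 x)
  (Hu0e : forall x, 0 < x < 1 -> - b x * Derive u0 x + c x * u0 x = f x).

(* [u0'] is differentiable because it equals [(c u0 - f) / b]. *)
Lemma ex_derive_reduced_derive x : 0 < x < 1 -> ex_derive (Derive u0) x.
Proof.
  intros Hx.
  assert (E : forall y, 0 < y < 1 -> (c y * u0 y - f y) / b y = Derive u0 y).
  { intros y Hy. rewrite <- (Hu0e y Hy). field. apply Hb, Hy. }
  apply (ex_derive_ext_loc (fun y => (c y * u0 y - f y) / b y)).
  - exact (filter_imp _ _ E (locally_in_open_unit_interval x Hx)).
  - apply ex_derive_div; [| apply Hb, Hx | apply Hb, Hx].
    apply (ex_derive_minus (fun y => c y * u0 y) f); [apply ex_derive_mult|]; auto.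
Qed.

Lemma layer_equation x : 0 < x < 1 ->
  - eps * Derive_n (fun y => u y - u0 y) 2 x - b x * Derive (fun y => u y - u0 y) x
  + c x * (u x - u0 x) = eps * Derive_n u0 2 x.
Proof.
  intros Hx.
  assert (D1 : forall y, 0 < y < 1 ->
            Derive (fun y => u y - u0 y) y = Derive u y - Derive u0 y).
  { intros y Hy. apply Derive_minus; [apply Hu | apply Hu0]; exact Hy. }
  assert (D2 : Derive_n (fun y => u y - u0 y) 2 x = Derive_n u 2 x - Derive_n u0 2 x).
  { simpl. rewrite (Derive_ext_loc _ (fun y => Derive u y - Derive u0 y)).
    - apply Derive_minus; [apply Hu | apply ex_derive_reduced_derive]; exact Hx.
    - exact (filter_imp _ _ D1 (locally_in_open_unit_interval x Hx)). }
  rewrite D2, D1 by exact Hx.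
  specialize (Hue x Hx). specialize (Hu0e x Hx). lra.
Qed.

End LayerEquation.

Lemma sigma_pos_le1 r : 0 <= r -> 0 < sigma r <= 1.
Proof.
  intros Hr. unfold sigma. destruct (Req_EM_T r 0) as [E|E]; [lra|].
  assert (Hexp := exp_ineq1 (2 * r) ltac:(lra)).
  split.
  - apply Rdiv_lt_0_compat; lra.
  - apply Rmult_le_reg_r with (exp (2 * r) - 1); [lra|].
    unfold Rdiv. rewrite Rmult_assoc, Rinv_l by lra. lra.
Qed.

Lemma exists_last_argmin (v : nat -> R) N : exists k, (k <= N)%nat /\
  (forall j, (j <= N)%nat -> v k <= v j) /\ (forall j, (k < j <= N)%nat -> v k < v j).
Proof.
  induction N as [|N [k [Hk [Hmin Hlast]]]].
  - exists 0%nat. split; [lia | split; intros j Hj; [replace j with 0%nat by lia; lra | lia]].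
  - destruct (Rle_dec (v (S N)) (v k)) as [Hle|Hgt].
    + exists (S N). split; [lia | split; [|intros j Hj; lia]].
      intros j Hj. destruct (Nat.eq_dec j (S N)) as [->|Hne]; [lra|].
      specialize (Hmin j ltac:(lia)). lra.
    + exists k. split; [lia | split]; intros j Hj;
        (destruct (Nat.eq_dec j (S N)) as [->|Hne]; [lra|]); [apply Hmin | apply Hlast]; lia.
Qed.

Section ASIOperator.

Variables (eps : R) (b c : R -> R) (x : nat -> R).

Lemma LN_add (U V : nat -> R) i :
  LN eps b c x (fun j => U j + V j) i = LN eps b c x U i + LN eps b c x V i.
Proof. unfold LN, D2, Dplus, Dminus, Rdiv. ring. Qed.

Lemma LN_sub (U V : nat -> R) i :
  LN eps b c x (fun j => U j - V j) i = LN eps b c x U i - LN eps b c x V i.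
Proof. unfold LN, D2, Dplus, Dminus, Rdiv. ring. Qed.

Lemma LN_lincomb (U V : nat -> R) p q i :
  LN eps b c x (fun j => p * U j + q * V j) i = p * LN eps b c x U i + q * LN eps b c x V i.
Proof. unfold LN, D2, Dplus, Dminus, Rdiv. ring. Qed.

Lemma LN_restriction (g : R -> R) k :
  LN eps b c x (fun j => g (x j)) k
  = tau eps b x g k
    + (- eps * Derive_n g 2 (x k) - b (x k) * Derive g (x k) + c (x k) * g (x k)).
Proof. unfold LN, tau. ring. Qed.

Lemma LN_affine p k : (1 <= k)%nat -> hstep x k <> 0 -> hstep x (S k) <> 0 ->
  LN eps b c x (fun j => p - x j) k = b (x k) + c (x k) * (p - x k).
Proof.
  intros Hk Hm Hp. unfold LN, D2, Dplus, Dminus, hbar. unfold hstep in *.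
  replace (S k - 1)%nat with k in * by lia.
  replace ((p - x (S k) - (p - x k)) / (x (S k) - x k)) with (-1) by (field; auto).
  replace ((p - x k - (p - x (k - 1)%nat)) / (x k - x (k - 1)%nat)) with (-1) by (field; auto).
  unfold Rdiv. ring.
Qed.

Hypothesis Heps : 0 < eps.

Lemma LN_neg_at_minimum (v : nat -> R) k : (1 <= k)%nat ->
  0 < hstep x k -> 0 < hstep x (S k) -> 0 < b (x k) -> 0 <= c (x k) ->
  v k <= v (k - 1)%nat -> v k < v (S k) -> v k < 0 -> LN eps b c x v k < 0.
Proof.
  intros Hk Hm Hp Hb Hc Hvm Hvp Hv.
  assert (Hrho : 0 <= rho eps b x k).
  { unfold rho. apply Rlt_le, Rdiv_lt_0_compat; [apply Rmult_lt_0_compat|]; lra. }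
  assert (Hs := sigma_pos_le1 _ Hrho).
  unfold LN, D2, Dplus, Dminus, hbar.
  set (s := sigma (rho eps b x k)) in *.
  set (hp := hstep x (S k)) in *. set (hm := hstep x k) in *.
  assert (Dp : 0 < (v (S k) - v k) / hp) by (apply Rdiv_lt_0_compat; lra).
  assert (Dm : (v k - v (k - 1)%nat) / hm <= 0).
  { unfold Rdiv. apply Rmult_le_0_r; [lra | left; apply Rinv_0_lt_compat; lra]. }
  assert (D2p : 0 < ((v (S k) - v k) / hp - (v k - v (k - 1)%nat) / hm) / ((hm + hp) / 2))
    by (apply Rdiv_lt_0_compat; lra).
  assert (0 < eps * s * (((v (S k) - v k) / hp - (v k - v (k - 1)%nat) / hm) / ((hm + hp) / 2)))
    by (apply Rmult_lt_0_compat; [apply Rmult_lt_0_compat|]; lra).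
  assert (0 < b (x k) * ((v (S k) - v k) / hp)) by (apply Rmult_lt_0_compat; lra).
  assert (c (x k) * v k <= 0) by (apply Rmult_le_0_l; lra).
  lra.
Qed.

Variable N : nat.
Hypotheses
  (Hsteps : forall k, (1 <= k <= N)%nat -> 0 < hstep x k)
  (Hbc : forall k, (1 <= k <= N - 1)%nat -> 0 < b (x k) /\ 0 <= c (x k)).

Lemma discrete_maximum_principle (v : nat -> R) :
  0 <= v 0%nat -> 0 <= v N ->
  (forall k, (1 <= k <= N - 1)%nat -> 0 <= LN eps b c x v k) ->
  forall i, (i <= N)%nat -> 0 <= v i.
Proof.
  intros H0 HN HL i Hi.
  destruct (exists_last_argmin v N) as [k [Hk [Hmin Hlast]]].
  destruct (Rle_dec 0 (v k)) as [Hpos|Hneg]; [specialize (Hmin i Hi); lra|].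
  exfalso.
  assert (Hk1 : (1 <= k <= N - 1)%nat).
  { destruct (Nat.eq_dec k 0) as [->|]; [lra|].
    destruct (Nat.eq_dec k N) as [->|]; [lra|]. lia. }
  destruct (Hbc k Hk1) as [Hb Hc].
  assert (LN eps b c x v k < 0).
  { apply LN_neg_at_minimum; try lia; try lra; auto.
    - apply Hsteps; lia.
    - apply Hsteps; lia.
    - apply Hmin; lia.
    - apply Hlast; lia. }
  specialize (HL k Hk1). lra.
Qed.

Lemma abs_le_barrier (e Phi : nat -> R) :
  Rabs (e 0%nat) <= Phi 0%nat -> Rabs (e N) <= Phi N ->
  (forall k, (1 <= k <= N - 1)%nat -> Rabs (LN eps b c x e k) <= LN eps b c x Phi k) ->
  forall i, (i <= N)%nat -> Rabs (e i) <= Phi i.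
Proof.
  intros H0 HN HL i Hi. apply Rabs_le_between in H0, HN.
  assert (Hminus := discrete_maximum_principle (fun j => Phi j - e j)).
  assert (Hplus := discrete_maximum_principle (fun j => Phi j + e j)).
  cbv beta in Hminus, Hplus. apply Rabs_le. split.
  - enough (0 <= Phi i + e i) by lra. apply Hplus; auto; try lra.
    intros k Hk. rewrite LN_add. specialize (HL k Hk).
    apply Rabs_le_between in HL. lra.
  - enough (0 <= Phi i - e i) by lra. apply Hminus; auto; try lra.
    intros k Hk. rewrite LN_sub. specialize (HL k Hk).
    apply Rabs_le_between in HL. lra.
Qed.

End ASIOperator.

(* A discrete analogue of [exp (- beta x / eps)]. *)
Fixpoint Psi (beta eps : R) (x : nat -> R) (i : nat) : R :=
  match i with
  | O => 1
  | S j => Psi beta eps x j / (1 + beta * hstep x (S j) / (2 * eps))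
  end.

Section DiscreteExponential.

Variables (beta eps : R) (x : nat -> R).
Hypotheses (Hbeta : 0 < beta) (Heps : 0 < eps).

Lemma Psi_pos_le1 i : (forall k, (1 <= k <= i)%nat -> 0 < hstep x k) ->
  0 < Psi beta eps x i <= 1.
Proof.
  induction i as [|i IH]; intros Hh; simpl; [lra|].
  destruct (IH (fun k Hk => Hh k ltac:(lia))) as [Hpos Hle1].
  assert (0 <= beta * hstep x (S i) / (2 * eps)).
  { apply Rlt_le, Rdiv_lt_0_compat; [apply Rmult_lt_0_compat; [|apply Hh; lia]|]; lra. }
  split.
  - apply Rdiv_lt_0_compat; lra.
  - apply Rmult_le_reg_r with (1 + beta * hstep x (S i) / (2 * eps)); [lra|].
    unfold Rdiv at 1. rewrite Rmult_assoc, Rinv_l by lra. nra.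
Qed.

Lemma LN_Psi_ge (b c : R -> R) k :
  (1 <= k)%nat -> 0 < hstep x k -> 0 < hstep x (S k) -> 0 < b (x k) -> 0 <= c (x k) ->
  0 < Psi beta eps x k ->
  Psi beta eps x k * beta / (2 * eps * (1 + beta * hstep x (S k) / (2 * eps))) *
    (b (x k) - beta * hstep x (S k) / (hstep x k + hstep x (S k)))
  <= LN eps b c x (Psi beta eps x) k.
Proof.
  intros Hk Hm Hp Hb Hc HP.
  destruct k as [|k]; [lia|].
  assert (E1 : Psi beta eps x (S (S k))
               = Psi beta eps x (S k) / (1 + beta * hstep x (S (S k)) / (2 * eps)))
    by reflexivity.
  assert (E2 : Psi beta eps x (S k) = Psi beta eps x k / (1 + beta * hstep x (S k) / (2 * eps)))
    by reflexivity.
  set (P := Psi beta eps x (S k)) in *.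
  set (hp := hstep x (S (S k))) in *. set (hm := hstep x (S k)) in *.
  assert (0 < beta * hp) by nra. assert (0 < beta * hm) by nra.
  assert (0 < beta * hp / (2 * eps)) by (apply Rdiv_lt_0_compat; nra).
  assert (0 < beta * hm / (2 * eps)) by (apply Rdiv_lt_0_compat; nra).
  assert (E3 : Psi beta eps x k = P * (1 + beta * hm / (2 * eps))).
  { rewrite E2. field. repeat split; lra. }
  unfold LN, D2, Dplus, Dminus, hbar. fold hp hm. simpl (S k - 1)%nat. rewrite Nat.sub_0_r.
  rewrite E1, E3. fold P.
  assert (Hrho : 0 <= rho eps b x (S k)).
  { unfold rho. fold hp. apply Rlt_le, Rdiv_lt_0_compat; [apply Rmult_lt_0_compat|]; lra. }
  destruct (sigma_pos_le1 _ Hrho) as [Hs0 Hs1].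
  set (s := sigma (rho eps b x (S k))) in *.
  set (q := P * beta / (2 * eps * (1 + beta * hp / (2 * eps)))).
  assert (Hq : 0 < q) by (apply Rdiv_lt_0_compat; [|apply Rmult_lt_0_compat]; nra).
  (* the second difference of [Psi] is nonnegative and is only damped by [sigma <= 1] *)
  assert (ED : eps * (((P / (1 + beta * hp / (2 * eps)) - P) / hp
                       - (P - P * (1 + beta * hm / (2 * eps))) / hm) / ((hm + hp) / 2))
               = q * (beta * hp / (hm + hp))).
  { unfold q. field. repeat split; lra. }
  assert (EP : - (b (x (S k)) * ((P / (1 + beta * hp / (2 * eps)) - P) / hp)) = q * b (x (S k))).
  { unfold q. field. repeat split; lra. }
  assert (0 <= q * (beta * hp / (hm + hp))).
  { apply Rmult_le_pos; [lra|]. apply Rlt_le, Rdiv_lt_0_compat; lra. }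
  assert (0 <= c (x (S k)) * P) by (apply Rmult_le_pos; lra).
  nra.
Qed.

Lemma LN_Psi_nonneg (b c : R -> R) k :
  (1 <= k)%nat -> 0 < hstep x k -> 0 < hstep x (S k) -> beta < b (x k) -> 0 <= c (x k) ->
  0 < Psi beta eps x k -> 0 <= LN eps b c x (Psi beta eps x) k.
Proof.
  intros Hk Hm Hp Hb Hc HP.
  eapply Rle_trans; [|apply LN_Psi_ge; auto; lra].
  assert (hstep x (S k) / (hstep x k + hstep x (S k)) <= 1).
  { apply Rmult_le_reg_r with (hstep x k + hstep x (S k)); [lra|].
    unfold Rdiv. rewrite Rmult_assoc, Rinv_l by lra. lra. }
  assert (beta * hstep x (S k) / (hstep x k + hstep x (S k)) <= beta).
  { unfold Rdiv in *. rewrite Rmult_assoc. nra. }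
  assert (0 < beta * hstep x (S k) / (2 * eps)) by (apply Rdiv_lt_0_compat; nra).
  apply Rmult_le_pos; [|lra].
  apply Rlt_le, Rdiv_lt_0_compat; nra.
Qed.

Lemma LN_Psi_uniform_ge (b c : R -> R) k h :
  (1 <= k)%nat -> 0 < h -> hstep x k = h -> hstep x (S k) = h ->
  beta < b (x k) -> 0 <= c (x k) -> 0 < Psi beta eps x k ->
  Psi beta eps x k * beta ^ 2 / (4 * eps * (1 + beta * h / (2 * eps)))
  <= LN eps b c x (Psi beta eps x) k.
Proof.
  intros Hk Hh Hm Hp Hb Hc HP.
  eapply Rle_trans; [|apply LN_Psi_ge; auto; try lra].
  rewrite Hm, Hp. replace (beta * h / (h + h)) with (beta / 2) by (field; lra).
  assert (0 < beta * h / (2 * eps)) by (apply Rdiv_lt_0_compat; nra).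
  set (r := 1 + beta * h / (2 * eps)) in *.
  assert (0 < r) by (unfold r; lra).
  replace (Psi beta eps x k * beta ^ 2 / (4 * eps * r))
    with (Psi beta eps x k * beta / (2 * eps * r) * (beta / 2)) by (field; repeat split; lra).
  apply Rmult_le_compat_l; [|lra].
  apply Rlt_le, Rdiv_lt_0_compat; nra.
Qed.

(* Each factor satisfies [1 + t/2 <= exp t] with [t = beta h / eps]. *)
Lemma exp_le_Psi h J : 0 < h -> x 0%nat = 0 ->
  (forall k, (1 <= k <= J)%nat -> hstep x k = h) ->
  forall i, (i <= J)%nat -> exp (- beta * x i / eps) <= Psi beta eps x i.
Proof.
  intros Hh Hx0 Hfine. induction i as [|i IH]; intros Hi.
  - rewrite Hx0. simpl. replace (- beta * 0 / eps) with 0 by (field; lra). rewrite exp_0; lra.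
  - simpl. assert (E := Hfine (S i) ltac:(lia)). rewrite E.
    unfold hstep in E. replace (S i - 1)%nat with i in E by lia.
    replace (- beta * x (S i) / eps) with (- beta * x i / eps + - (beta * h / eps))
      by (rewrite <- E; field; lra).
    rewrite exp_plus, exp_Ropp.
    assert (0 < beta * h / eps) by (apply Rdiv_lt_0_compat; nra).
    assert (0 < beta * h / (2 * eps)) by (apply Rdiv_lt_0_compat; nra).
    assert (Hfactor : 1 + beta * h / (2 * eps) <= exp (beta * h / eps)).
    { assert (H1 := exp_ineq1_le (beta * h / eps)).
      replace (beta * h / (2 * eps)) with (beta * h / eps / 2) by (field; lra). lra. }
    unfold Rdiv at 3. apply Rmult_le_compat.
    + left; apply exp_pos.
    + left; apply Rinv_0_lt_compat, exp_pos.
    + apply IH; lia.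
    + apply Rinv_le_contravar; lra.
Qed.

End DiscreteExponential.

Section MeshNodes.

Variables (x : nat -> R) (N : nat).
Hypotheses (Hx0 : x 0%nat = 0) (HxN : x N = 1)
  (Hsteps : forall k, (1 <= k <= N)%nat -> 0 < hstep x k).

Lemma mesh_increasing i j : (i < j <= N)%nat -> x i < x j.
Proof.
  induction j as [|j IH]; intros Hij; [lia|].
  assert (Hstep := Hsteps (S j) ltac:(lia)). unfold hstep in Hstep.
  replace (S j - 1)%nat with j in Hstep by lia.
  destruct (Nat.eq_dec i j) as [->|Hne]; [lra|].
  specialize (IH ltac:(lia)). lra.
Qed.

Lemma mesh_in_unit_interval i : (i <= N)%nat -> 0 <= x i <= 1.
Proof.
  intros Hi. rewrite <- Hx0, <- HxN.
  split; [destruct (Nat.eq_dec i 0) as [->|] | destruct (Nat.eq_dec i N) as [->|]];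
    try lra; left; apply mesh_increasing; lia.
Qed.

Lemma mesh_interior i : (1 <= i <= N - 1)%nat -> 0 < x i < 1.
Proof. intros Hi. rewrite <- Hx0, <- HxN. split; apply mesh_increasing; lia. Qed.

End MeshNodes.

Section Barrier.

Variables (eps beta h Cstar eta1 eta2 : R) (b c : R -> R) (x : nat -> R) (N J : nat).
Hypotheses (Heps : 0 < eps) (Hbeta : 0 < beta) (Hh : 0 < h)
  (HCstar : 0 <= Cstar) (Heta1 : 0 <= eta1) (Heta2 : 0 <= eta2)
  (Hx0 : x 0%nat = 0) (HxN : x N = 1)
  (Hfine : forall k, (1 <= k <= J)%nat -> hstep x k = h)
  (Hsteps : forall k, (1 <= k <= N)%nat -> 0 < hstep x k)
  (Hb : forall y, 0 <= y <= 1 -> beta < b y)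
  (Hc : forall y, 0 <= y <= 1 -> 0 <= c y).

Let r := 1 + beta * h / (2 * eps).
Let K1 := Cstar * (eta1 + eta2) / beta.
Let K2 := 4 * Cstar * eta1 * r / beta ^ 2.
Let Phi j := K1 * (2 - x j) + K2 * Psi beta eps x j.

Lemma fine_ratio_gt1 : 1 < r.
Proof. unfold r. assert (0 < beta * h / (2 * eps)) by (apply Rdiv_lt_0_compat; nra). lra. Qed.

Lemma barrier_weights_nonneg : 0 <= K1 /\ 0 <= K2.
Proof.
  pose proof fine_ratio_gt1.
  split; apply Rdiv_le_0_compat; try (apply pow_lt); try lra;
    repeat apply Rmult_le_pos; lra.
Qed.

Lemma LN_barrier_ge k : (1 <= k <= N - 1)%nat ->
  Cstar * (eta1 + eta2) <= LN eps b c x Phi k /\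
  ((k <= J - 1)%nat ->
   Cstar * eta1 * (1 + / eps * exp (- beta * x k / eps)) + Cstar * eta2 <= LN eps b c x Phi k).
Proof.
  intros Hk. destruct barrier_weights_nonneg as [HK1 HK2].
  assert (Hm : 0 < hstep x k) by (apply Hsteps; lia).
  assert (Hp : 0 < hstep x (S k)) by (apply Hsteps; lia).
  assert (Hxk := mesh_in_unit_interval x N Hx0 HxN Hsteps k ltac:(lia)).
  assert (Hbk := Hb _ Hxk). assert (Hck := Hc _ Hxk).
  assert (HPsi := Psi_pos_le1 beta eps x Hbeta Heps k ltac:(intros; apply Hsteps; lia)).
  unfold Phi. rewrite LN_lincomb, LN_affine by lra || lia.
  assert (Hlin : Cstar * (eta1 + eta2) <= K1 * (b (x k) + c (x k) * (2 - x k))).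
  { replace (Cstar * (eta1 + eta2)) with (K1 * beta) by (unfold K1; field; lra).
    apply Rmult_le_compat_l; [exact HK1|].
    assert (0 <= c (x k) * (2 - x k)) by (apply Rmult_le_pos; lra). lra. }
  split.
  - assert (0 <= K2 * LN eps b c x (Psi beta eps x) k); [|lra].
    apply Rmult_le_pos; [exact HK2|]. apply LN_Psi_nonneg; auto; lia || lra.
  - intros HkJ.
    assert (HL := LN_Psi_uniform_ge beta eps x Hbeta Heps b c k h ltac:(lia) Hh
                    (Hfine k ltac:(lia)) (Hfine (S k) ltac:(lia)) Hbk Hck (proj1 HPsi)).
    fold r in HL.
    assert (Hexp := exp_le_Psi beta eps x Hbeta Heps h J Hh Hx0 Hfine k ltac:(lia)).
    (* [K2] is chosen so that [K2 * beta^2 / (4 eps r) = Cstar eta1 / eps] *)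
    assert (EK2 : K2 * (Psi beta eps x k * beta ^ 2 / (4 * eps * r))
                  = Cstar * eta1 * (/ eps * Psi beta eps x k)).
    { pose proof fine_ratio_gt1. unfold K2. field. repeat split; lra. }
    assert (K2 * (Psi beta eps x k * beta ^ 2 / (4 * eps * r)) <= K2 * LN eps b c x (Psi beta eps x) k)
      by (apply Rmult_le_compat_l; assumption).
    assert (/ eps * exp (- beta * x k / eps) <= / eps * Psi beta eps x k)
      by (apply Rmult_le_compat_l; [left; apply Rinv_0_lt_compat|]; assumption).
    assert (Cstar * eta1 * (/ eps * exp (- beta * x k / eps)) <= Cstar * eta1 * (/ eps * Psi beta eps x k))
      by (apply Rmult_le_compat_l; [apply Rmult_le_pos|]; assumption).
    nra.
Qed.

Lemma barrier_le_weights i : (i <= N)%nat -> 0 <= Phi i <= 2 * K1 + K2.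
Proof.
  intros Hi. destruct barrier_weights_nonneg as [HK1 HK2].
  assert (Hxi := mesh_in_unit_interval x N Hx0 HxN Hsteps i Hi).
  assert (HPsi := Psi_pos_le1 beta eps x Hbeta Heps i ltac:(intros; apply Hsteps; lia)).
  unfold Phi. split; nra.
Qed.

Theorem abs_le_of_truncation_bound (e : nat -> R) :
  e 0%nat = 0 -> e N = 0 ->
  (forall k, (1 <= k <= J - 1)%nat ->
     Rabs (LN eps b c x e k) <= Cstar * eta1 * (1 + / eps * exp (- beta * x k / eps))) ->
  (forall k, (J <= k <= N - 1)%nat -> Rabs (LN eps b c x e k) <= Cstar * eta2) ->
  forall i, (i <= N)%nat -> Rabs (e i) <= 2 * K1 + K2.
Proof.
  intros He0 HeN Hfine_tau Hcoarse_tau i Hi.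
  apply Rle_trans with (Phi i); [|apply barrier_le_weights, Hi].
  apply (abs_le_barrier eps b c x Heps N Hsteps); auto.
  - intros k Hk. assert (Hxk := mesh_in_unit_interval x N Hx0 HxN Hsteps k ltac:(lia)).
    split; [specialize (Hb _ Hxk); lra | apply Hc, Hxk].
  - rewrite He0, Rabs_R0. apply barrier_le_weights; lia.
  - rewrite HeN, Rabs_R0. apply barrier_le_weights; lia.
  - intros k Hk. destruct (LN_barrier_ge k Hk) as [Hall Hfine_k].
    destruct (Nat.le_gt_cases J k) as [HJk|HkJ].
    + specialize (Hcoarse_tau k ltac:(lia)). nra.
    + specialize (Hfine_k ltac:(lia)). specialize (Hfine_tau k ltac:(lia)). nra.
Qed.

End Barrier.

Section LayerAdaptedMesh.

Variables (shishkin : bool) (a beta eps Q : R) (N J : nat).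
Hypotheses (Ha : 0 < a) (Hbeta : 0 < beta) (Heps : 0 < eps < 1) (HQ : 0 < Q < 1)
  (HN : (0 < N)%nat) (HJ : INR J = Q * INR N) (Hxi : xi shishkin a beta eps N <= Q).

Let x := mesh shishkin a beta eps N J.
Let h := xi shishkin a beta eps N / INR J.
Let H := (1 - xi shishkin a beta eps N) / (INR N - INR J).

Lemma transition_index_bounds : (0 < J)%nat /\ (J < N)%nat.
Proof.
  assert (0 < INR N) by (apply lt_0_INR; lia).
  split; apply INR_lt; simpl; nra.
Qed.

Lemma lam_gt1 : 1 < lam shishkin eps N.
Proof.
  destruct transition_index_bounds. unfold lam. destruct shishkin.
  - apply (lt_INR 1). lia.
  - rewrite <- Rinv_1. apply Rinv_lt_contravar; lra.
Qed.

Lemma fine_step_pos : 0 < h.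
Proof.
  destruct transition_index_bounds. unfold h, xi.
  assert (0 < ln (lam shishkin eps N)) by (rewrite <- ln_1; apply ln_increasing; [lra | apply lam_gt1]).
  apply Rdiv_lt_0_compat; [|apply lt_0_INR; lia].
  apply Rmult_lt_0_compat; [apply Rdiv_lt_0_compat; [apply Rmult_lt_0_compat|]|]; lra.
Qed.

Lemma coarse_step_pos : 0 < H.
Proof.
  destruct transition_index_bounds.
  assert (INR J < INR N) by (apply lt_INR; lia).
  unfold H. apply Rdiv_lt_0_compat; lra.
Qed.

Lemma mesh_fine i : (i <= J)%nat -> x i = INR i * h.
Proof. intros Hi. unfold x, mesh. rewrite (proj2 (Nat.leb_le i J) Hi). reflexivity. Qed.

Lemma mesh_coarse i : (J < i)%nat -> x i = xi shishkin a beta eps N + (INR i - INR J) * H.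
Proof. intros Hi. unfold x, mesh. rewrite (proj2 (Nat.leb_gt i J) Hi). reflexivity. Qed.

Lemma mesh_first : x 0%nat = 0.
Proof. rewrite mesh_fine by apply Nat.le_0_l. simpl. ring. Qed.

Lemma mesh_last : x N = 1.
Proof.
  destruct transition_index_bounds. rewrite mesh_coarse by lia.
  assert (INR J < INR N) by (apply lt_INR; lia). unfold H. field. lra.
Qed.

Lemma mesh_step_fine k : (1 <= k <= J)%nat -> hstep x k = h.
Proof.
  intros Hk. unfold hstep. rewrite !mesh_fine by lia.
  replace k with (S (k - 1)) at 1 by lia. rewrite S_INR. ring.
Qed.

Lemma mesh_step_pos k : (1 <= k <= N)%nat -> 0 < hstep x k.
Proof.
  intros Hk. destruct (Nat.le_gt_cases k J) as [HkJ|HJk].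
  - rewrite mesh_step_fine by lia. apply fine_step_pos.
  - assert (HH := coarse_step_pos). unfold hstep. rewrite (mesh_coarse k) by lia.
    destruct (Nat.eq_dec k (S J)) as [->|Hne].
    + replace (S J - 1)%nat with J by lia. rewrite mesh_fine, S_INR by lia.
      destruct transition_index_bounds.
      replace (INR J * h) with (xi shishkin a beta eps N) by (unfold h; field; apply not_0_INR; lia).
      lra.
    + rewrite mesh_coarse, minus_INR by lia. simpl. lra.
Qed.

(* [beta h / (2 eps) = (a / 2Q) (ln lambda) / N], and [ln N <= N], [ln (1/eps) = |ln eps|]. *)
Lemma fine_ratio_le_kappa : 1 + beta * h / (2 * eps) <= (1 + a / (2 * Q)) * kappa shishkin eps N.
Proof.
  destruct transition_index_bounds. assert (HNp : 0 < INR N) by (apply lt_0_INR; lia).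
  assert (E : beta * h / (2 * eps) = a / (2 * Q) * (ln (lam shishkin eps N) / INR N)).
  { unfold h, xi. rewrite HJ. field. repeat split; lra. }
  rewrite E. assert (0 < a / (2 * Q)) by (apply Rdiv_lt_0_compat; lra).
  unfold lam, kappa. destruct shishkin.
  - assert (ln (INR N) <= INR N).
    { rewrite <- (ln_exp (INR N)) at 2. apply ln_le; [lra|].
      assert (Hx := exp_ineq1_le (INR N)). lra. }
    assert (ln (INR N) / INR N <= 1).
    { apply Rmult_le_reg_r with (INR N); [lra|].
      unfold Rdiv. rewrite Rmult_assoc, Rinv_l by lra. lra. }
    nra.
  - rewrite ln_Rinv by lra.
    assert (ln eps < 0) by (rewrite <- ln_1; apply ln_increasing; lra).
    rewrite Rabs_left by lra.
    assert (0 <= - ln eps / INR N) by (apply Rdiv_le_0_compat; lra).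
    nra.
Qed.

Lemma mesh_layer_adapted :
  x 0%nat = 0 /\ x N = 1 /\ 0 < h /\
  (forall k, (1 <= k <= J)%nat -> hstep x k = h) /\
  (forall k, (1 <= k <= N)%nat -> 0 < hstep x k).
Proof.
  repeat split; auto using mesh_first, mesh_last, fine_step_pos, mesh_step_fine, mesh_step_pos.
Qed.

End LayerAdaptedMesh.

Lemma kappa_ge1 shishkin eps N : (0 < N)%nat -> 1 <= kappa shishkin eps N.
Proof.
  intros HN. unfold kappa. destruct shishkin; [lra|].
  assert (0 <= Rabs (ln eps) / INR N)
    by (apply Rdiv_le_0_compat; [apply Rabs_pos | apply lt_0_INR; lia]).
  lra.
Qed.

Lemma barrier_weights_le_max (beta Cstar eta1 eta2 r r0 kappa : R) :
  0 < beta -> 0 <= Cstar -> 0 <= eta1 -> 0 <= eta2 -> 1 <= kappa -> 0 <= r0 -> r <= r0 * kappa ->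
  2 * (Cstar * (eta1 + eta2) / beta) + 4 * Cstar * eta1 * r / beta ^ 2
  <= (4 * Cstar / beta + 4 * Cstar * r0 / beta ^ 2) * Rmax (kappa * eta1) eta2.
Proof.
  intros Hbeta HC He1 He2 Hk Hr0 Hr.
  set (M := Rmax (kappa * eta1) eta2).
  assert (HM1 : kappa * eta1 <= M) by apply Rmax_l.
  assert (HM2 : eta2 <= M) by apply Rmax_r.
  assert (HM3 : eta1 <= M) by nra.
  assert (Hb1 : 0 < / beta) by (apply Rinv_0_lt_compat; lra).
  assert (Hb2 : 0 < / beta ^ 2) by (apply Rinv_0_lt_compat, pow_lt; lra).
  assert (eta1 * r <= r0 * (kappa * eta1)) by nra.
  assert (r0 * (kappa * eta1) <= r0 * M) by nra.
  assert (Cstar * (eta1 + eta2) * / beta <= 2 * Cstar * M * / beta)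
    by (apply Rmult_le_compat_r; nra).
  assert (4 * Cstar * (eta1 * r) * / beta ^ 2 <= 4 * Cstar * (r0 * M) * / beta ^ 2)
    by (apply Rmult_le_compat_r; nra).
  unfold Rdiv. nra.
Qed.

Theorem theorem2 (b c : R -> R) (beta Q a Cstar : R) :
  Ck01 4 b -> Ck01 4 c ->
  0 < beta -> (forall x, 0 <= x <= 1 -> beta < b x) ->
  (forall x, 0 <= x <= 1 -> 0 <= c x) ->
  0 < Q < 1 -> (exists p q : Z, IZR q <> 0 /\ Q = IZR p / IZR q) ->
  0 < a -> 0 < Cstar ->
  exists C : R, 0 < C /\
  forall (shishkin : bool) (f : R -> R) (eps : R) (N J : nat) (eta1 eta2 : R)
         (u u0 : R -> R) (W : nat -> R),
    Ck01 4 f ->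
    0 < eps < 1 ->
    (0 < N)%nat ->
    INR J = Q * INR N ->
    xi shishkin a beta eps N <= Q ->
    0 <= eta1 -> 0 <= eta2 ->
    cont_on01 u ->
    (forall x, 0 < x < 1 -> ex_derive u x /\ ex_derive (Derive u) x) ->
    (forall x, 0 < x < 1 ->
       - eps * Derive_n u 2 x - b x * Derive u x + c x * u x = f x) ->
    u 0 = 0 -> u 1 = 0 ->
    cont_on01 u0 ->
    (forall x, 0 < x < 1 -> ex_derive u0 x) ->
    (forall x, 0 < x < 1 -> - b x * Derive u0 x + c x * u0 x = f x) ->
    u0 1 = 0 ->
    W 0%nat = - u0 0 ->
    (forall i, (1 <= i <= N - 1)%nat ->
       LN eps b c (mesh shishkin a beta eps N J) W i
       = eps * Derive_n u0 2 (mesh shishkin a beta eps N J i)) ->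
    W N = 0 ->
    (forall i, (1 <= i <= J - 1)%nat ->
       Rabs (tau eps b (mesh shishkin a beta eps N J) (fun x => u x - u0 x) i)
       <= Cstar * eta1 *
          (1 + / eps * exp (- beta * mesh shishkin a beta eps N J i / eps))) ->
    (forall i, (J <= i <= N - 1)%nat ->
       Rabs (tau eps b (mesh shishkin a beta eps N J) (fun x => u x - u0 x) i)
       <= Cstar * eta2) ->
    forall i, (i <= N)%nat ->
      Rabs ((u (mesh shishkin a beta eps N J i) - u0 (mesh shishkin a beta eps N J i))
            - W i)
      <= C * Rmax (kappa shishkin eps N * eta1) eta2.
Proof.
  (* [J = Q N] is assumed integral directly. *)
  intros Hb Hc Hbeta Hbb Hcc HQ _ Ha HCstar.
  assert (Hr0 : 0 < 1 + a / (2 * Q)) by (assert (0 < a / (2 * Q)) by (apply Rdiv_lt_0_compat; lra); lra).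
  exists (4 * Cstar / beta + 4 * Cstar * (1 + a / (2 * Q)) / beta ^ 2). split.
  { assert (0 < 4 * Cstar / beta) by (apply Rdiv_lt_0_compat; lra).
    assert (0 < 4 * Cstar * (1 + a / (2 * Q)) / beta ^ 2)
      by (apply Rdiv_lt_0_compat; [nra | apply pow_lt; lra]).
    lra. }
  intros shishkin f eps N J eta1 eta2 u u0 W Hf Heps HN HJ Hxi Heta1 Heta2 _ Hu Hue Hu_0 Hu_1
    _ Hu0 Hu0e Hu0_1 HW0 HWe HWN Htau_fine Htau_coarse.
  destruct (mesh_layer_adapted shishkin a beta eps Q N J Ha Hbeta Heps HQ HN HJ Hxi)
    as [Hx0 [HxN [Hh [Hfine Hsteps]]]].
  pose proof (transition_index_bounds Q N J HQ HN HJ).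
  set (x := mesh shishkin a beta eps N J) in *.
  set (h := xi shishkin a beta eps N / INR J) in *.
  set (e := fun j => u (x j) - u0 (x j) - W j).
  assert (Hw := layer_equation eps b c f u u0
    (fun y Hy => conj (Ck01_ex_derive 4 b Hb ltac:(lia) y Hy)
                      (Rgt_not_eq _ _ (Rlt_trans _ _ _ Hbeta (Hbb y ltac:(lra)))))
    (Ck01_ex_derive 4 c Hc ltac:(lia)) (Ck01_ex_derive 4 f Hf ltac:(lia)) Hu Hue Hu0 Hu0e).
  assert (Herr : forall k, (1 <= k <= N - 1)%nat ->
            LN eps b c x e k = tau eps b x (fun y => u y - u0 y) k).
  { intros k Hk. unfold e. rewrite LN_sub, HWe by exact Hk.
    rewrite (LN_restriction _ _ _ _ (fun y => u y - u0 y)), Hw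
      by exact (mesh_interior x N Hx0 HxN Hsteps k Hk).
    ring. }
  intros i Hi. change (u (x i) - u0 (x i) - W i) with (e i).
  eapply Rle_trans.
  - apply (abs_le_of_truncation_bound eps beta h Cstar eta1 eta2 b c x N J); try lra; auto.
    + unfold e. rewrite Hx0, HW0, Hu_0. ring.
    + unfold e. rewrite HxN, HWN, Hu_1, Hu0_1. ring.
    + intros k Hk. rewrite Herr by lia. apply Htau_fine, Hk.
    + intros k Hk. rewrite Herr by lia. apply Htau_coarse, Hk.
  - apply barrier_weights_le_max; try lra.
    + apply kappa_ge1, HN.
    + apply fine_ratio_le_kappa; assumption.
Qed.
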